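(* Let $\theta$ be a regular cardinal and let $I$ be a weakly $\theta$-saturated, $\theta$-indecomposable ideal on a cardinal $\kappa$. Let $\langle S_\alpha:\alpha<\kappa\rangle$ be a sequence of sets of ordinals with $|S_\alpha|<\theta$ for all $\alpha$. If $\langle h_\beta:\beta<\tau\rangle$ is a sequence of functions in $\prod_{\alpha<\kappa}S_\alpha$ that is increasing in the pointwise order $\leq$, with $\mathrm{cf}(\tau)\geq\theta$, then it is eventually constant modulo $I$: there is $\beta^*<\tau$ with $\{\alpha:h_\beta(\alpha)\neq h_{\beta^*}(\alpha)\}\in I$ for all $\beta\geq\beta^*$.
   Context: By an ideal on a cardinal $\kappa$ we mean a proper ideal on $\kappa$ containing all bounded subsets of $\kappa$. $I$ is weakly $\theta$-saturated if there is no partition of $\kappa$ into $\theta$ pairwise disjoint sets not in $I$. $I$ is $\theta$-indecomposable if whenever $\langle A_i:i<\theta\rangle$ are subsets of $\kappa$ with $\bigcup_{i<\theta}A_i\notin I$, there is $w\subseteq\theta$ with $|w|<\theta$ and $\bigcup_{i\in w}A_i\notin I$. *)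

(* ordinals/cardinals are modelled as well-ordered types. *)
Set Implicit Arguments.

Definition leR {T : Type} (R : T -> T -> Prop) (x y : T) : Prop := R x y \/ x = y.

Definition is_wellorder {T : Type} (R : T -> T -> Prop) : Prop :=
  well_founded R /\
  (forall x, ~ R x x) /\
  (forall x y z, R x y -> R y z -> R x z) /\
  (forall x y, R x y \/ x = y \/ R y x).

Definition injective {A B : Type} (f : A -> B) : Prop :=
  forall x y, f x = f y -> x = y.

Definition card_ge_type {X : Type} (A : X -> Prop) (Th : Type) : Prop :=
  exists f : Th -> X, injective f /\ forall t, A (f t).

Definition card_lt_type {X : Type} (A : X -> Prop) (Th : Type) : Prop :=
  ~ card_ge_type A Th.

(* (K, R) is a cardinal: an initial ordinal, i.e. a well-order no proper
   initial segment of which has the same cardinality as K *)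
Definition is_cardinal {K : Type} (R : K -> K -> Prop) : Prop :=
  is_wellorder R /\ forall k : K, card_lt_type (fun x => R x k) K.

Definition cofinal {T : Type} (R : T -> T -> Prop) (A : T -> Prop) : Prop :=
  forall x, exists y, A y /\ leR R x y.

Definition cf_ge {T : Type} (R : T -> T -> Prop) (Th : Type) : Prop :=
  forall A : T -> Prop, cofinal R A -> card_ge_type A Th.

(* regular cardinal: infinite cardinal equal to its own cofinality *)
Definition is_regular {Th : Type} (R : Th -> Th -> Prop) : Prop :=
  is_cardinal R /\ (exists f : nat -> Th, injective f) /\ cf_ge R Th.

Definition is_ideal {K : Type} (R : K -> K -> Prop) (I : (K -> Prop) -> Prop) : Prop :=
  ~ I (fun _ => True) /\
  (forall A B : K -> Prop, I B -> (forall x, A x -> B x) -> I A) /\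
  (forall A B : K -> Prop, I A -> I B -> I (fun x => A x \/ B x)) /\
  (forall A : K -> Prop, (exists b, forall x, A x -> R x b) -> I A).

Definition weakly_saturated {K : Type} (I : (K -> Prop) -> Prop) (Th : Type) : Prop :=
  ~ exists P : Th -> K -> Prop,
      (forall i j x, P i x -> P j x -> i = j) /\
      (forall x, exists i, P i x) /\
      (forall i, ~ I (P i)).

Definition indecomposable {K : Type} (I : (K -> Prop) -> Prop) (Th : Type) : Prop :=
  forall A : Th -> K -> Prop,
    ~ I (fun x => exists i, A i x) ->
    exists w : Th -> Prop, card_lt_type w Th /\
      ~ I (fun x => exists i, w i /\ A i x).

From Stdlib Require Import Classical ClassicalEpsilon FunctionalExtensionality.

(* Suppose the sequence is not eventually constant modulo I.  Then there is an
   increasing subsequence (h_(beta_i))_(i<theta) any two members of which differ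
   on an I-positive set.  For each alpha, i |-> h_(beta_i)(alpha) is
   nondecreasing with fewer than theta values, so by regularity it is constant
   beyond some g(alpha) < theta; hence every tail {alpha | i < g(alpha)} is
   I-positive.  Indecomposability cuts each tail down to an I-positive interval
   of g-values, and stacking theta such intervals partitions kappa into theta
   I-positive pieces, contradicting weak saturation. *)

Lemma wf_rec_choice (A X : Type) (R : A -> A -> Prop) (x0 : X) (wf : well_founded R)
  (G : A -> (A -> X) -> X -> Prop)
  (G_local : forall i f f', (forall j, R j i -> f j = f' j) -> forall x, G i f x -> G i f' x)
  (G_total : forall i f, exists x, G i f x) :
  exists f : A -> X, forall i, G i f (f i).
Proof.
  (* [x0] is a junk value making the partial recursive calls total; by
     [G_local] it is never observed. *)
  pose (ext := fun i (rec : forall j, R j i -> X) (j : A) =>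
     match excluded_middle_informative (R j i) with left H => rec j H | right _ => x0 end).
  pose (F := fun i (rec : forall j, R j i -> X) =>
     proj1_sig (constructive_indefinite_description _ (G_total i (ext i rec)))).
  pose (f := Fix wf (fun _ => X) F).
  assert (ext_ext : forall i r r', (forall j p, r j p = r' j p) -> ext i r = ext i r').
  { intros i r r' H. apply functional_extensionality. intro j. unfold ext.
    destruct (excluded_middle_informative (R j i)); auto. }
  assert (f_eq : forall i, f i = F i (fun j _ => f j)).
  { intro i. unfold f. refine (Fix_eq wf (fun _ => X) F _ i).
    intros x r r' H. unfold F. rewrite (ext_ext x r r' H). reflexivity. }
  exists f. intro i. rewrite (f_eq i). unfold F.
  apply G_local with (ext i (fun j _ => f j)).
  - intros j Hj. unfold ext.
    destruct (excluded_middle_informative (R j i)); [reflexivity|contradiction].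
  - exact (proj2_sig (constructive_indefinite_description _ _)).
Qed.

Lemma wf_least {A : Type} (R : A -> A -> Prop) (P : A -> Prop) :
  well_founded R -> forall x, P x -> exists m, P m /\ forall j, R j m -> ~ P j.
Proof.
  intros wf x. induction x as [x IH] using (well_founded_ind wf). intros Px.
  destruct (classic (exists j, R j x /\ P j)) as [[j [Rj Pj]]|N].
  - eauto.
  - exists x; split; auto. intros j Rj Pj; apply N; eauto.
Qed.

Lemma leR_antisym {T : Type} (R : T -> T -> Prop) x y :
  is_wellorder R -> leR R x y -> leR R y x -> x = y.
Proof.
  intros [_ [irr [tr _]]] [H|H] [H'|H']; auto.
  exfalso; exact (irr x (tr _ _ _ H H')).
Qed.

Lemma leR_upper_bound {T : Type} (R : T -> T -> Prop) x y :
  is_wellorder R -> exists z, leR R x z /\ leR R y z.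
Proof.
  intros [_ [_ [_ tri]]]. unfold leR.
  destruct (tri x y) as [H|[H|H]]; [exists y|exists y|exists x]; auto.
Qed.

Lemma card_lt_image {X Y Th : Type} (f : X -> Y) (A : X -> Prop) :
  card_lt_type A Th -> card_lt_type (fun z => exists j, A j /\ z = f j) Th.
Proof.
  intros HA [e [e_inj e_in]]. apply HA.
  destruct (choice _ e_in) as [e' He']. exists e'. split.
  - intros t t' Heq. apply e_inj.
    rewrite (proj2 (He' t)), (proj2 (He' t')), Heq. reflexivity.
  - intro t. exact (proj1 (He' t)).
Qed.

Lemma card_lt_singleton {Th : Type} (i : Th) :
  (exists f : nat -> Th, injective f) -> card_lt_type (fun z => z = i) Th.
Proof.
  intros [n n_inj] [e [e_inj e_in]].
  assert (H : n 0 = n 1). { apply e_inj. rewrite (e_in (n 0)), (e_in (n 1)). reflexivity. }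
  apply n_inj in H. discriminate.
Qed.

Lemma cf_ge_small_bounded {T Th : Type} (R : T -> T -> Prop) (A : T -> Prop) :
  is_wellorder R -> cf_ge R Th -> card_lt_type A Th -> exists x, forall y, A y -> R y x.
Proof.
  intros [_ [_ [_ tri]]] Hcf HA.
  destruct (classic (cofinal R A)) as [C|C].
  - exfalso; apply HA, Hcf, C.
  - apply not_all_ex_not in C. destruct C as [x Hx].
    exists x. intros y Ay. destruct (tri y x) as [H|[H|H]]; auto;
    exfalso; apply Hx; exists y; unfold leR; auto.
Qed.

Lemma ideal_sub {K : Type} {R : K -> K -> Prop} {I : (K -> Prop) -> Prop} :
  is_ideal R I -> forall A B : K -> Prop, I B -> (forall x, A x -> B x) -> I A.
Proof. intros HI. exact (proj1 (proj2 HI)). Qed.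

(* Saturation is needed only when [K] is empty: then no bound witnesses that
   [fun _ => False] is bounded. *)
Lemma saturated_ideal_empty {K Th : Type} (R : K -> K -> Prop) (I : (K -> Prop) -> Prop) :
  is_ideal R I -> weakly_saturated I Th -> I (fun _ => False).
Proof.
  intros [_ [_ [_ I_bounded]]] Hsat. apply NNPP; intro N. apply Hsat.
  exists (fun _ _ => False). split; [|split].
  - intros; contradiction.
  - intro x. exfalso. apply N, I_bounded. exists x. intros ? [].
  - intros i Hi; apply N; exact Hi.
Qed.

Section RegularCardinal.

Variables (Th : Type) (ltTh : Th -> Th -> Prop).
Hypothesis HTh : is_regular ltTh.

Lemma regular_wellorder : is_wellorder ltTh.
Proof. exact (proj1 (proj1 HTh)). Qed.

Lemma regular_small_bounded (A : Th -> Prop) :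
  card_lt_type A Th -> exists x, forall y, A y -> ltTh y x.
Proof. exact (cf_ge_small_bounded ltTh A regular_wellorder (proj2 (proj2 HTh))). Qed.

Lemma regular_exists_gt (i : Th) : exists i', ltTh i i'.
Proof.
  destruct (regular_small_bounded (fun z => z = i)) as [i' Hi'].
  - exact (card_lt_singleton i (proj1 (proj2 HTh))).
  - exists i'. exact (Hi' i eq_refl).
Qed.

(* The first occurrences of the values form a small set, and past its bound
   every value has already occurred. *)
Lemma nondecreasing_small_range_stabilizes
  (O : Type) (ltO : O -> O -> Prop) (HO : is_wellorder ltO)
  (S : O -> Prop) (HS : card_lt_type S Th) (f : Th -> O)
  (f_in : forall i, S (f i))
  (f_mono : forall i i', leR ltTh i i' -> leR ltO (f i) (f i')) :
  exists g, forall i i', ltTh i i' -> f i' <> f i -> ltTh i g.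
Proof.
  pose proof regular_wellorder as [wfTh [_ [trTh triTh]]].
  pose (first := fun i => forall j, ltTh j i -> f j <> f i).
  assert (first_small : card_lt_type first Th).
  { intros [e [e_inj e_first]]. apply HS. exists (fun t => f (e t)). split; [|auto].
    intros t t' Heq. apply e_inj.
    destruct (triTh (e t) (e t')) as [H|[H|H]]; auto; exfalso.
    - exact (e_first t' _ H Heq).
    - exact (e_first t _ H (eq_sym Heq)). }
  destruct (regular_small_bounded first first_small) as [g Hg].
  exists g. intros i i' Hii' Hne.
  destruct (wf_least ltTh (fun m => f m = f i') wfTh i' eq_refl) as [m [Hm m_least]].
  assert (Hmg : ltTh m g).
  { apply Hg. intros j Hj Heq. apply (m_least j Hj). congruence. }
  destruct (triTh i g) as [H|H]; [exact H|exfalso; apply Hne].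
  assert (Hmi : ltTh m i) by (destruct H as [<-|H]; eauto).
  apply (leR_antisym ltO _ _ HO); [rewrite <- Hm|]; apply f_mono; left; auto.
Qed.

Section Ideal.

Variables (K : Type) (ltK : K -> K -> Prop) (I : (K -> Prop) -> Prop).
Hypotheses (HI : is_ideal ltK I) (Hsat : weakly_saturated I Th)
  (Hind : indecomposable I Th).

Lemma positive_tail_interval (g : K -> Th) (i : Th) :
  ~ I (fun a => ltTh i (g a)) -> exists j, ~ I (fun a => ltTh i (g a) /\ ltTh (g a) j).
Proof.
  intros tail_pos.
  destruct (Hind (fun k a => ltTh i k /\ g a = k)) as [w [w_small w_pos]].
  { intro H. apply tail_pos. apply (ideal_sub HI) with (1 := H). eauto. }
  destruct (regular_small_bounded w w_small) as [j Hj].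
  exists j. intro H. apply w_pos. apply (ideal_sub HI) with (1 := H).
  intros a [k [wk [Hik <-]]]. auto.
Qed.

Definition block (g : K -> Th) (gamma : Th -> Th) (i : Th) (a : K) : Prop :=
  ltTh (g a) (gamma i) /\ forall j, ltTh j i -> ~ ltTh (g a) (gamma j).

Lemma block_partition (g : K -> Th) (gamma : Th -> Th) :
  (forall i, ltTh i (gamma i)) ->
  (forall i j a, block g gamma i a -> block g gamma j a -> i = j) /\
  (forall a, exists i, block g gamma i a).
Proof.
  pose proof regular_wellorder as [wfTh [_ [_ triTh]]].
  intros gamma_gt. split.
  - intros i j a [Hi1 Hi2] [Hj1 Hj2].
    destruct (triTh i j) as [H|[H|H]]; auto; exfalso;
      [exact (Hj2 i H Hi1)|exact (Hi2 j H Hj1)].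
  - intro a.
    destruct (wf_least ltTh (fun m => ltTh (g a) (gamma m)) wfTh _ (gamma_gt (g a)))
      as [m [Hm1 Hm2]].
    exists m; split; auto.
Qed.

Lemma ideal_bounds_regular_function (g : K -> Th) : exists i, I (fun a => ltTh i (g a)).
Proof.
  pose proof regular_wellorder as [wfTh [irrTh [trTh triTh]]].
  apply NNPP; intro unbounded.
  assert (interval_pos : forall i, exists j, ~ I (fun a => ltTh i (g a) /\ ltTh (g a) j)).
  { intro i. apply positive_tail_interval. intro H. apply unbounded. eauto. }
  destruct (proj1 (proj2 HTh)) as [n _].
  destruct (wf_rec_choice Th Th ltTh (n 0) wfTh
    (fun i gamma x => ltTh i x /\
       ~ I (fun a => ltTh (g a) x /\ forall j, ltTh j i -> ~ ltTh (g a) (gamma j))))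
    as [gamma Hgamma].
  - intros i gamma gamma' Heq x [Hix Hpos]. split; [exact Hix|].
    intro H; apply Hpos. apply (ideal_sub HI) with (1 := H).
    intros a [Hx Hbelow]. split; [exact Hx|]. intros j Hj. rewrite <- (Heq j Hj). auto.
  - intros i gamma.
    destruct (regular_small_bounded _ (card_lt_image gamma _ (proj2 (proj1 HTh) i)))
      as [y1 Hy1].
    destruct (leR_upper_bound ltTh y1 i regular_wellorder) as [y [Hy1y Hiy]].
    destruct (interval_pos y) as [j Hj].
    assert (Hyj : ltTh y j).
    { apply NNPP; intro N. apply Hj. apply (ideal_sub HI) with (1 := saturated_ideal_empty ltK I HI Hsat).
      intros a [Hya Haj]. apply N. eauto. }
    assert (gamma_below : forall j', ltTh j' i -> ltTh (gamma j') y).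
    { intros j' Hj'. destruct Hy1y as [Hy1y|<-]; eauto. }
    exists j. split.
    + destruct Hiy as [Hiy|<-]; eauto.
    + intro H; apply Hj. apply (ideal_sub HI) with (1 := H). intros a [Hya Haj]. split; [exact Haj|].
      intros j' Hj' Hlt. apply (irrTh (gamma j')). eauto.
  - destruct (block_partition g gamma (fun i => proj1 (Hgamma i))) as [disj cover].
    apply Hsat. exists (block g gamma). split; [exact disj|split; [exact cover|]].
    intro i. exact (proj2 (Hgamma i)).
Qed.

End Ideal.

End RegularCardinal.

Lemma positive_increasing_sequence
  (Th : Type) (ltTh : Th -> Th -> Prop) (HTh : is_cardinal ltTh)
  (T : Type) (ltT : T -> T -> Prop) (HT : is_wellorder ltT) (Hcf : cf_ge ltT Th)
  (K O : Type) (ltO : O -> O -> Prop) (HO : is_wellorder ltO)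
  (I : (K -> Prop) -> Prop) (I_sub : forall A B, I B -> (forall x, A x -> B x) -> I A)
  (h : T -> K -> O)
  (Hinc : forall b b', leR ltT b b' -> forall a, leR ltO (h b a) (h b' a))
  (t0 : T) (Hnext : forall y, exists b, ltT y b /\ ~ I (fun a => h b a <> h y a)) :
  exists beta : Th -> T, forall j i, ltTh j i ->
    ltT (beta j) (beta i) /\ ~ I (fun a => h (beta i) a <> h (beta j) a).
Proof.
  pose proof HT as [_ [_ [trT _]]].
  destruct HTh as [[wfTh _] init_small].
  assert (h_ne_below : forall b1 y b a,
    leR ltT b1 y -> leR ltT y b -> h b a <> h y a -> h b a <> h b1 a).
  { intros b1 y b a H1 H2 Hne Heq. apply Hne, (leR_antisym ltO _ _ HO).
    - rewrite Heq. apply Hinc; auto.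
    - apply Hinc; auto. }
  destruct (wf_rec_choice Th T ltTh t0 wfTh
    (fun i beta x => forall j, ltTh j i ->
       ltT (beta j) x /\ ~ I (fun a => h x a <> h (beta j) a)))
    as [beta Hbeta].
  - intros i beta beta' Heq x Hx j Hj. rewrite <- (Heq j Hj). auto.
  - intros i beta.
    destruct (cf_ge_small_bounded ltT _ HT Hcf (card_lt_image beta _ (init_small i)))
      as [y Hy].
    destruct (Hnext y) as [b [Hyb Hb]].
    exists b. intros j Hj.
    assert (Hjy : ltT (beta j) y) by (apply Hy; eauto).
    split; [eauto|].
    intro H. apply Hb. apply I_sub with (1 := H). intros a.
    apply (h_ne_below _ y); left; auto.
  - exists beta. intros j i Hji. exact (Hbeta i j Hji).
Qed.

Theorem corollary2p2
  (Th : Type) (ltTh : Th -> Th -> Prop) (HTh : is_regular ltTh)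
  (K : Type) (ltK : K -> K -> Prop) (HK : is_cardinal ltK)
  (I : (K -> Prop) -> Prop) (HI : is_ideal ltK I)
  (Hsat : weakly_saturated I Th) (Hind : indecomposable I Th)
  (O : Type) (ltO : O -> O -> Prop) (HO : is_wellorder ltO)
  (S : K -> O -> Prop) (HS : forall a : K, card_lt_type (S a) Th)
  (T : Type) (ltT : T -> T -> Prop) (HT : is_wellorder ltT)
  (h : T -> K -> O)
  (Hh : forall b a, S a (h b a))
  (Hinc : forall b b', leR ltT b b' -> forall a, leR ltO (h b a) (h b' a))
  (Hcf : cf_ge ltT Th) :
  exists bstar : T, forall b : T, leR ltT bstar b ->
    I (fun a => h b a <> h bstar a).
Proof.
  pose proof HTh as [[_ init_small] [[n _] _]].
  destruct (Hcf (fun _ => True)) as [enum _].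
  { intro x. exists x. split; [exact Logic.I|right; reflexivity]. }
  apply NNPP; intro never_constant.
  assert (Hnext : forall y, exists b, ltT y b /\ ~ I (fun a => h b a <> h y a)).
  { intro y. apply NNPP; intro N. apply never_constant. exists y. intros b [Hyb|<-].
    - apply NNPP; intro Hb. apply N. eauto.
    - apply (ideal_sub HI) with (1 := saturated_ideal_empty ltK I HI Hsat).
      intros a Ha. apply Ha. reflexivity. }
  destruct (positive_increasing_sequence Th ltTh (proj1 HTh) T ltT HT Hcf K O ltO HO
              I (ideal_sub HI) h Hinc (enum (n 0)) Hnext) as [beta Hbeta].
  assert (stabilizes : forall a, exists g, forall i i', ltTh i i' ->
            h (beta i') a <> h (beta i) a -> ltTh i g).
  { intro a. apply (nondecreasing_small_range_stabilizes Th ltTh HTh O ltO HO (S a) (HS a));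
      [intro; apply Hh|].
    intros i i' [Hii'|<-]; [apply Hinc; left; apply Hbeta, Hii'|right; reflexivity]. }
  destruct (choice _ stabilizes) as [g Hg].
  destruct (ideal_bounds_regular_function Th ltTh HTh K ltK I HI Hsat Hind g) as [i Hi].
  destruct (regular_exists_gt Th ltTh HTh i) as [i' Hii'].
  apply (proj2 (Hbeta i i' Hii')). apply (ideal_sub HI) with (1 := Hi).
  intros a Ha. exact (Hg a i i' Hii' Ha).
Qed.
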